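(* If a finite algebra $\mathbf{A}$ is a spread of a family of subsets on which the induced algebras have Maltsev polynomials, then $d_{\mathbf{A}}(n)\in O(n)$.
   Context: $d_{\mathbf{A}}(n)$ is the least size of a generating set of $\mathbf{A}^n$. A subset $S\subseteq A$ is a spread of a family $\mathcal U$ of subsets of $A$ if $S=p(U_1,\dots,U_k)$ for a polynomial $p$ of $\mathbf{A}$ and (not necessarily distinct) $U_i\in\mathcal U$; $\mathbf{A}$ is a spread of $\mathcal U$ if $A$ is. For $U\subseteq A$ the induced algebra $\mathbf{A}|_U$ has universe $U$ and as operations the restrictions to $U$ of the polynomials of $\mathbf{A}$ under which $U$ is closed. A Maltsev polynomial is a polynomial $m(x,y,z)$ with $m(x,y,y)=x=m(y,y,x)$. *)

From Stdlib Require Import ClassicalEpsilon.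
From mathcomp Require Import all_boot.

Unset Printing Implicit Defensive.

Inductive term (I : Type) (ar : I -> nat) (V : Type) : Type :=
| Var (v : V)
| App (i : I) (args : 'I_(ar i) -> term I ar V).

Arguments Var {I ar V} v.
Arguments App {I ar V} i args.

Fixpoint eval_term {T I : Type} {ar : I -> nat} {V : Type}
    (op : forall i, ('I_(ar i) -> T) -> T) (env : V -> T) (t : term I ar V) : T :=
  match t with
  | Var v => env v
  | App i args => op i (fun j => eval_term op env (args j))
  end.

(* Polynomials: terms in k variables with constants from the universe. *)
Definition poly_env {T : Type} {k : nat} (x : 'I_k -> T) (v : 'I_k + T) : T :=
  match v with inl i => x i | inr c => c end.

Definition is_polynomial {T I : Type} {ar : I -> nat}
    (op : forall i, ('I_(ar i) -> T) -> T) (k : nat) (f : ('I_k -> T) -> T) : Prop :=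
  exists t : term I ar ('I_k + T), forall x, f x = eval_term op (poly_env x) t.

Definition args3 {T : Type} (a b c : T) : 'I_3 -> T :=
  fun i => nth a [:: a; b; c] i.

Definition is_maltsev_polynomial {T I : Type} {ar : I -> nat}
    (op : forall i, ('I_(ar i) -> T) -> T) (m : ('I_3 -> T) -> T) : Prop :=
  is_polynomial op 3 m /\
  forall x y : T, m (args3 x y y) = x /\ m (args3 y y x) = x.

(* Induced algebra A|_U : universe U, operations = restrictions to U of the
   polynomials of A under which U is closed. *)
Definition closed_under {T : finType} (U : {set T}) (k : nat)
    (f : ('I_k -> T) -> T) : Prop :=
  forall x : 'I_k -> T, (forall i, x i \in U) -> f x \in U.

Definition ind_carrier {T : finType} (U : {set T}) : Type := {x : T | x \in U}.

Definition ind_idx {T : finType} {I : Type} {ar : I -> nat}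
    (op : forall i, ('I_(ar i) -> T) -> T) (U : {set T}) : Type :=
  {k : nat & {f : ('I_k -> T) -> T | is_polynomial op k f /\ closed_under U k f}}.

Definition ind_arity {T : finType} {I : Type} {ar : I -> nat}
    {op : forall i, ('I_(ar i) -> T) -> T} {U : {set T}} (j : ind_idx op U) : nat :=
  projT1 j.

Definition ind_op {T : finType} {I : Type} {ar : I -> nat}
    (op : forall i, ('I_(ar i) -> T) -> T) (U : {set T})
    (j : ind_idx op U) (args : 'I_(ind_arity j) -> ind_carrier U) : ind_carrier U :=
  exist (fun x => x \in U)
    (proj1_sig (projT2 j) (fun i => proj1_sig (args i)))
    (proj2 (proj2_sig (projT2 j)) (fun i => proj1_sig (args i))
       (fun i => proj2_sig (args i))).

Definition is_spread_of {T : finType} {I : Type} {ar : I -> nat}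
    (op : forall i, ('I_(ar i) -> T) -> T) (F : {set {set T}}) (S : {set T}) : Prop :=
  exists (k : nat) (p : ('I_k -> T) -> T) (Us : 'I_k -> {set T}),
    is_polynomial op k p /\ (forall i, Us i \in F) /\
    forall a : T, a \in S <-> exists u : 'I_k -> T, (forall i, u i \in Us i) /\ p u = a.

Definition pow_op {T : finType} {I : Type} {ar : I -> nat}
    (op : forall i, ('I_(ar i) -> T) -> T) (n : nat)
    (i : I) (args : 'I_(ar i) -> {ffun 'I_n -> T}) : {ffun 'I_n -> T} :=
  [ffun l => op i (fun j => args j l)].

Arguments pow_op {T I ar} op n i args.

(* S generates A^n: the subuniverse generated by S (= values of terms,
   without constants, at elements of S) is all of A^n. *)
Definition generates_pow {T : finType} {I : Type} {ar : I -> nat}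
    (op : forall i, ('I_(ar i) -> T) -> T) (n : nat) (S : {set {ffun 'I_n -> T}}) : Prop :=
  forall x : {ffun 'I_n -> T},
    exists (k : nat) (t : term I ar 'I_k) (s : 'I_k -> {ffun 'I_n -> T}),
      (forall j, s j \in S) /\ eval_term (pow_op op n) s t = x.

Definition has_gen_of_size {T : finType} {I : Type} {ar : I -> nat}
    (op : forall i, ('I_(ar i) -> T) -> T) (n m : nat) : Prop :=
  exists S : {set {ffun 'I_n -> T}}, #|S| = m /\ generates_pow op n S.

Arguments has_gen_of_size {T I ar} op n m.

Definition has_gen_of_sizeb {T : finType} {I : Type} {ar : I -> nat}
    (op : forall i, ('I_(ar i) -> T) -> T) (n m : nat) : bool :=
  if excluded_middle_informative (has_gen_of_size op n m) then true else false.

Lemma has_gen_exists {T : finType} {I : Type} {ar : I -> nat}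
    (op : forall i, ('I_(ar i) -> T) -> T) (n : nat) :
  exists m, has_gen_of_sizeb op n m.
Proof.
exists #|[set: {ffun 'I_n -> T}]|; rewrite /has_gen_of_sizeb.
case: excluded_middle_informative => // H; exfalso; apply: H.
exists [set: {ffun 'I_n -> T}]; split => // x.
exists 1, (Var ord0), (fun _ => x); split => //= j; exact: in_setT.
Qed.

Definition d_A {T : finType} {I : Type} {ar : I -> nat}
    (op : forall i, ('I_(ar i) -> T) -> T) (n : nat) : nat :=
  ex_minn (has_gen_exists op n).

From mathcomp Require Import all_boot.
From Stdlib Require Import FunctionalExtensionality ClassicalEpsilon.

(* A^n is generated by the O(n) tuples that are constant outside at most one
   coordinate.  Since these include the constants, the subuniverse they generate
   is closed under the polynomials of A, hence under those of each induced
   algebra A|_U.  With a Maltsev polynomial m of A|_U, a tuple z of U^n is built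
   one coordinate at a time: if y agrees with z before position j and equals c
   from j on, and d equals c except for z_j at position j, then m(y, c, d)
   agrees with z up to position j.  Finally every tuple of A^n is
   p(u_1, ..., u_k) computed coordinatewise, with u_i a tuple of U_i^n. *)

Section Generation.

Variables (T : finType) (I : Type) (ar : I -> nat).
Variable op : forall i, ('I_(ar i) -> T) -> T.
Variable n : nat.

Inductive generated (G : {set {ffun 'I_n -> T}}) : {ffun 'I_n -> T} -> Prop :=
| generated_base x : x \in G -> generated G x
| generated_app i (args : 'I_(ar i) -> {ffun 'I_n -> T}) :
    (forall j, generated G (args j)) -> generated G (pow_op op n i args).

Lemma generated_term {G x} : generated G x ->
  exists t : term I ar 'I_#|G|, eval_term (pow_op op n) (fun j => enum_val j) t = x.
Proof.
elim=> [y yG | i args _ IH].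
  by exists (Var (enum_rank_in yG y)); rewrite /= enum_rankK_in.
have [ts Hts] := fin_all_exists IH.
exists (App i ts) => /=; congr pow_op; exact: functional_extensionality.
Qed.

Lemma generates_powP G : (forall x, generated G x) -> generates_pow op n G.
Proof.
move=> genG x; have [t Ht] := generated_term (genG x).
by exists #|G|, t, (fun j => enum_val j); split=> // j; exact: enum_valP.
Qed.

Lemma d_A_le_card G : generates_pow op n G -> d_A op n <= #|G|.
Proof.
move=> genG; rewrite /d_A; case: ex_minnP => m _; apply.
by rewrite /has_gen_of_sizeb; case: excluded_middle_informative => // [] []; exists G.
Qed.

Variable G : {set {ffun 'I_n -> T}}.
Hypothesis const_in_G : forall c, [ffun=> c] \in G.

Lemma generated_const c : generated G [ffun=> c].
Proof. exact/generated_base/const_in_G. Qed.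

Lemma generated_eval_term k (t : term I ar ('I_k + T)) (ys : 'I_k -> {ffun 'I_n -> T}) :
  (forall i, generated G (ys i)) ->
  generated G [ffun l => eval_term op (poly_env (fun i => ys i l)) t].
Proof.
move=> genys; elim: t => [[i|c] | i args IH] /=.
- by rewrite (_ : [ffun l => _] = ys i) //; apply/ffunP => l; rewrite ffunE.
- exact: generated_const.
- rewrite (_ : [ffun l => _] = pow_op op n i (fun j =>
      [ffun l => eval_term op (poly_env (fun i => ys i l)) (args j)])).
    exact: generated_app.
  apply/ffunP => l; rewrite !ffunE; congr op.
  by apply: functional_extensionality => j; rewrite ffunE.
Qed.

Lemma generated_polynomial k (f : ('I_k -> T) -> T) (ys : 'I_k -> {ffun 'I_n -> T}) :
  is_polynomial op k f -> (forall i, generated G (ys i)) ->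
  generated G [ffun l => f (fun i => ys i l)].
Proof.
move=> [t Ht] genys.
rewrite (_ : [ffun l => _] = [ffun l => eval_term op (poly_env (fun i => ys i l)) t]).
  exact: generated_eval_term.
by apply/ffunP => l; rewrite !ffunE Ht.
Qed.

Variable U : {set T}.

Lemma generated_ind_eval_term (V : Type) (t : term (ind_idx op U) ind_arity V)
    (e : 'I_n -> V -> ind_carrier U) :
  (forall v, generated G [ffun l => val (e l v)]) ->
  generated G [ffun l => val (eval_term (ind_op op U) (e l) t)].
Proof.
move=> gene; elim: t => [v | j args IH] /=; first exact: gene.
move: args IH; case: j => k [f [polyf ?]] args IH /=.
rewrite (_ : [ffun l => _] = [ffun l => f (fun i =>
    [ffun l' => val (eval_term (ind_op op U) (e l') (args i))] l)]).
  exact: generated_polynomial.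
apply/ffunP => l; rewrite !ffunE; congr f.
by apply: functional_extensionality => i; rewrite ffunE.
Qed.

Lemma generated_ind_polynomial k (f : ('I_k -> ind_carrier U) -> ind_carrier U)
    (zs : 'I_k -> 'I_n -> ind_carrier U) :
  is_polynomial (ind_op op U) k f -> (forall i, generated G [ffun l => val (zs i l)]) ->
  generated G [ffun l => val (f (fun i => zs i l))].
Proof.
move=> [t Ht] genzs.
rewrite (_ : [ffun l => _] =
    [ffun l => val (eval_term (ind_op op U) (poly_env (fun i => zs i l)) t)]).
  by apply: generated_ind_eval_term => -[i | c]; [exact: genzs | exact: generated_const].
by apply/ffunP => l; rewrite !ffunE Ht.
Qed.

Hypothesis point_in_G : forall (l0 : 'I_n) c d, [ffun l => if l == l0 then d else c] \in G.

Lemma generated_splice (m : ('I_3 -> ind_carrier U) -> ind_carrier U)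
    (c : ind_carrier U) (z : 'I_n -> ind_carrier U) j :
  is_maltsev_polynomial (ind_op op U) m -> j <= n ->
  generated G [ffun l : 'I_n => val (if l < j then z l else c)].
Proof.
move=> [polym maltm]; elim: j => [_ | j IHj lt_jn].
  by rewrite (_ : [ffun l => _] = [ffun=> val c]); [exact: generated_const |
    apply/ffunP => l; rewrite !ffunE].
pose j0 := Ordinal lt_jn.
pose y (l : 'I_n) := if l < j then z l else c.
pose d (l : 'I_n) := if l == j0 then z l else c.
rewrite (_ : [ffun l => _] = [ffun l => val (m (args3 (y l) c (d l)))]).
  apply: (generated_ind_polynomial 3 m (fun i l => args3 (y l) c (d l) i)) => //.
  case=> -[|[|[|//]]] ? /=; first exact: IHj (ltnW lt_jn).
    by rewrite (_ : [ffun l => _] = [ffun=> val c]); [exact: generated_const |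
      apply/ffunP => l; rewrite !ffunE].
  rewrite (_ : [ffun l => _] = [ffun l => if l == j0 then val (z j0) else val c]).
    exact: generated_base.
  by apply/ffunP => l; rewrite !ffunE /d; case: eqP => [-> |].
apply/ffunP => l; rewrite !ffunE /y /d ltnS leq_eqVlt -[l == j0]/((l : nat) == j).
by case: ltngtP; rewrite ?(maltm _ _).1 ?(maltm _ _).2.
Qed.

Lemma generated_ind_tuple (z : 'I_n -> ind_carrier U) :
  (exists m, is_maltsev_polynomial (ind_op op U) m) -> 0 < n ->
  generated G [ffun l => val (z l)].
Proof.
move=> [m maltm] n_gt0.
rewrite (_ : [ffun l => _] =
    [ffun l : 'I_n => val (if l < n then z l else z (Ordinal n_gt0))]).
  exact: generated_splice _ _ _ _ maltm (leqnn n).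
by apply/ffunP => l; rewrite !ffunE ltn_ord.
Qed.

End Generation.

Arguments generated {T I ar} op {n} G x.
Arguments generated_ind_tuple {T I ar op n G} const_in_G {U} point_in_G z.

Lemma generated_spread {T : finType} {I : Type} {ar : I -> nat}
    {op : forall i, ('I_(ar i) -> T) -> T} {F : {set {set T}}} {n : nat}
    {G : {set {ffun 'I_n -> T}}} :
  is_spread_of op F [set: T] ->
  (forall U, U \in F -> exists m, is_maltsev_polynomial (ind_op op U) m) ->
  (forall c, [ffun=> c] \in G) ->
  (forall (l0 : 'I_n) c d, [ffun l => if l == l0 then d else c] \in G) ->
  0 < n -> forall x, generated op G x.
Proof.
move=> [k [p [Us [polyp [UsF spreadA]]]]] maltF const_in_G point_in_G n_gt0 x.
have /fin_all_exists[us Hus] :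
    forall l, exists u : 'I_k -> T, (forall i, u i \in Us i) /\ p u = x l.
  by move=> l; apply/spreadA/in_setT.
pose ys i := [ffun l => us l i].
rewrite (_ : x = [ffun l => p (fun i => ys i l)]).
  apply: generated_polynomial => // i.
  have := generated_ind_tuple const_in_G point_in_G
    (fun l => exist _ (us l i) ((Hus l).1 i)) (maltF _ (UsF i)) n_gt0.
  by rewrite (_ : [ffun l => _] = ys i) //; apply/ffunP => l; rewrite !ffunE.
apply/ffunP => l; rewrite ffunE -(Hus l).2; congr p.
by apply: functional_extensionality => i; rewrite ffunE.
Qed.

Definition almost_const (T : finType) n : {set {ffun 'I_n -> T}} :=
  [set [ffun l => if l == q.2.1 then q.2.2 else q.1] | q in [set: T * ('I_n * T)]].

Lemma card_almost_const (T : finType) n : #|almost_const T n| <= #|T| * #|T| * n.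
Proof.
apply: (leq_trans (leq_imset_card _ _)).
by rewrite cardsT !card_prod card_ord mulnA mulnAC.
Qed.

Lemma const_in_almost_const (T : finType) n c : 0 < n -> [ffun=> c] \in almost_const T n.
Proof.
move=> n_gt0; apply/imsetP; exists (c, (Ordinal n_gt0, c)); rewrite ?in_setT //.
by apply/ffunP => l; rewrite !ffunE; case: ifP.
Qed.

Lemma point_in_almost_const (T : finType) n (l0 : 'I_n) (c d : T) :
  [ffun l => if l == l0 then d else c] \in almost_const T n.
Proof. by apply/imsetP; exists (c, (l0, d)); rewrite ?in_setT. Qed.

Theorem corollary5p3 (T : finType) (I : Type) (ar : I -> nat)
    (op : forall i, ('I_(ar i) -> T) -> T) (F : {set {set T}}) :
  is_spread_of op F [set: T] ->
  (forall U : {set T}, U \in F ->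
     exists m, is_maltsev_polynomial (ind_op op U) m) ->
  exists C N : nat, forall n : nat, N <= n -> d_A op n <= C * n.
Proof.
move=> spreadA maltF; exists (#|T| * #|T|), 1 => n n_gt0.
apply: leq_trans (card_almost_const T n).
apply/d_A_le_card/generates_powP/(generated_spread spreadA maltF) => //.
- by move=> c; apply: const_in_almost_const.
- exact: point_in_almost_const.
Qed.
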